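(* Let $T(n)=(3n+1)/2^{v_2(3n+1)}$ be the Syracuse map and, for odd $n$, $L(n)=v_2(n+1)-1$. The natural density, among the odd positive integers, of those odd $n$ with $T^{L(n)+1}(n)<n$ equals $$P_{1\mathrm{cyc}}=\sum_{\ell\ge 0}2^{-(\ell+1)}\cdot 2^{-\lfloor(\log_2 3-1)(\ell+1)\rfloor}=0.71372549767589\ldots$$
   Context: $v_2$ is the $2$-adic valuation; $T^j$ the $j$-th iterate. *)

From Stdlib Require Import Reals Arith List.
Open Scope R_scope.

(* 2-adic valuation on nat (fuel-based; the fuel n suffices since v2 n <= n).
   Convention v2 0 = 0 (never used at 0 below). *)
Fixpoint v2_aux (fuel n : nat) : nat :=
  match fuel with
  | O => O
  | S f => if Nat.eqb n 0 then O
           else if Nat.even n then S (v2_aux f (Nat.div n 2)) else O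
  end.
Definition v2 (n : nat) : nat := v2_aux n n.

Definition syr (n : nat) : nat := Nat.div (3 * n + 1) (2 ^ v2 (3 * n + 1)).

Definition Lfun (n : nat) : nat := v2 (n + 1) - 1.

Definition good (n : nat) : bool := Nat.ltb (Nat.iter (Lfun n + 1) syr n) n.

Definition count_good (N : nat) : nat :=
  length (filter (fun k => good (2 * k + 1)) (seq 0 N)).

Definition dens (N : nat) : R := INR (count_good N) / INR N.

Definition log2_3 : R := ln 3 / ln 2.

Definition P1cyc_term (l : nat) : R :=
  (/ 2) ^ (l + 1) * powerRZ 2 (- Int_part ((log2_3 - 1) * INR (l + 1))).

(* Write an odd [n] as [n + 1 = 2^j m] with [m] odd, so that [L(n) = j - 1].  The first
   [j - 1] Syracuse steps multiply [n + 1] by [3/2], and the [j]-th one gives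
   [T^j n = (3^j m - 1) / 2^w] with [w = v2(3^j m - 1)].  Hence [T^j n < n] forces
   [2^(w + j) > 3^j], i.e. [w >= b_j := floor(j log2 3) + 1 - j], and conversely [w >= b_j]
   suffices once [m >= 2^b_j].  The condition [w >= b_j] says [m = 3^(-j) mod 2^b_j], so, up
   to the finitely many [n] with small [m], the [n = 2k + 1] with [L(n) = j - 1] that descend
   are those with [k] in one residue class modulo [2^floor(j log2 3)]; this class has density
   [2^(-floor(j log2 3))], the [(j-1)]-th term of the series.  Truncating at [j <= J] costs at
   most the density [2^(-J)] of the [n] with [L(n) >= J], plus [O(1/N)] boundary effects, so
   the frequencies converge to the sum of the series.  Its numerical value follows from the
   first 33 terms and the tail bound [2^(-floor(j log2 3)) < 2 / 3^j]. *)

From Stdlib Require Import Reals Arith List Lia Lra NArith.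
Open Scope nat_scope.

(** * Syracuse iterates *)

Lemma pow2_gt0 e : 0 < 2 ^ e.
Proof. apply Nat.neq_0_lt_0, Nat.pow_nonzero. lia. Qed.

Lemma pow3_gt0 e : 0 < 3 ^ e.
Proof. apply Nat.neq_0_lt_0, Nat.pow_nonzero. lia. Qed.

Lemma v2_aux_pow2_mul_odd f a c : a < f -> v2_aux f (2 ^ a * (2 * c + 1)) = a.
Proof.
  revert a. induction f as [|f IH]; intros a Ha; [lia|].
  cbn [v2_aux].
  replace (Nat.eqb (2 ^ a * (2 * c + 1)) 0) with false
    by (symmetry; apply Nat.eqb_neq; pose proof (pow2_gt0 a); nia).
  destruct a as [|a].
  - rewrite Nat.pow_0_r, Nat.mul_1_l, Nat.add_comm, Nat.even_add_mul_2. reflexivity.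
  - replace (2 ^ S a * (2 * c + 1)) with (2 * (2 ^ a * (2 * c + 1)))
      by (rewrite Nat.pow_succ_r'; lia).
    rewrite Nat.even_mul, (Nat.mul_comm 2 (2 ^ a * _)), Nat.div_mul, IH by lia.
    reflexivity.
Qed.

Lemma v2_pow2_mul_odd a c : v2 (2 ^ a * (2 * c + 1)) = a.
Proof.
  apply v2_aux_pow2_mul_odd.
  pose proof (Nat.pow_gt_lin_r 2 a). nia.
Qed.

Lemma odd_part_exists n : 0 < n -> exists a c, n = 2 ^ a * (2 * c + 1).
Proof.
  induction n as [n IH] using (well_founded_induction lt_wf). intros Hn.
  destruct (Nat.Even_or_Odd n) as [[h Hh]|[h Hh]].
  - destruct (IH h) as [a [c Hac]]; try lia.
    exists (S a), c. rewrite Nat.pow_succ_r'. lia.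
  - exists 0, h. simpl. lia.
Qed.

Lemma odd_part_unique a c a' c' :
  2 ^ a * (2 * c + 1) = 2 ^ a' * (2 * c' + 1) -> a = a' /\ c = c'.
Proof.
  intro H.
  assert (Ha : a = a')
    by (rewrite <- (v2_pow2_mul_odd a c), <- (v2_pow2_mul_odd a' c'); congruence).
  subst a'. split; [reflexivity|].
  apply Nat.mul_cancel_l in H; [lia|]. pose proof (pow2_gt0 a). lia.
Qed.

Lemma pow2_dvd_pow2_mul_odd b w c :
  Nat.divide (2 ^ b) (2 ^ w * (2 * c + 1)) <-> b <= w.
Proof.
  split.
  - intro H. destruct (le_lt_dec b w) as [|Hlt]; [assumption|exfalso].
    assert (H2 : Nat.divide (2 ^ w * 2) (2 ^ w * (2 * c + 1))).
    { apply Nat.divide_trans with (2 ^ b); [|exact H].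
      replace b with (w + 1 + (b - (w + 1))) by lia. rewrite !Nat.pow_add_r.
      apply Nat.divide_factor_l. }
    apply Nat.mul_divide_cancel_l in H2; [|apply Nat.pow_nonzero; lia].
    destruct H2 as [z Hz]. lia.
  - intro H. replace w with (b + (w - b)) by lia.
    rewrite Nat.pow_add_r, <- Nat.mul_assoc. apply Nat.divide_factor_l.
Qed.

Lemma syr_odd_part y a c : 3 * y + 1 = 2 ^ a * (2 * c + 1) -> syr y = 2 * c + 1.
Proof.
  intro H. unfold syr. rewrite H, v2_pow2_mul_odd, Nat.mul_comm, Nat.div_mul; [reflexivity|].
  pose proof (pow2_gt0 a). lia.
Qed.

Lemma iter_syr_pow2_mul_pred i m p : 0 < m -> p <= i ->
  Nat.iter p syr (2 ^ S i * m - 1) = 3 ^ p * 2 ^ (S i - p) * m - 1.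
Proof.
  intros Hm. induction p as [|p IH]; intros Hp.
  - rewrite Nat.sub_0_r, Nat.pow_0_r, Nat.mul_1_l. reflexivity.
  - rewrite Nat.iter_succ, IH by lia.
    replace (S i - p) with (S (S (i - S p))) by lia.
    replace (S i - S p) with (S (i - S p)) by lia.
    set (q := i - S p). rewrite !Nat.pow_succ_r'.
    set (A := 3 ^ p * 2 ^ q * m).
    assert (HA : 0 < A) by (pose proof (pow2_gt0 q); pose proof (pow3_gt0 p); unfold A; nia).
    replace (3 ^ p * (2 * (2 * 2 ^ q)) * m - 1) with (4 * A - 1) by (unfold A; nia).
    replace (3 * 3 ^ p * (2 * 2 ^ q) * m - 1) with (2 * (3 * A - 1) + 1) by (unfold A; nia).
    apply (syr_odd_part _ 1). simpl. lia.
Qed.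

Lemma good_odd_part k i d w c :
  k + 1 = 2 ^ i * (2 * d + 1) -> 3 ^ S i * (2 * d + 1) - 1 = 2 ^ w * (2 * c + 1) ->
  good (2 * k + 1) = Nat.ltb (2 * c + 1) (2 * k + 1).
Proof.
  intros Hk Hw.
  assert (Hn : 2 * k + 1 = 2 ^ S i * (2 * d + 1) - 1) by (rewrite Nat.pow_succ_r'; lia).
  assert (HL : Lfun (2 * k + 1) = i).
  { unfold Lfun. replace (2 * k + 1 + 1) with (2 ^ S i * (2 * d + 1)) by lia.
    rewrite v2_pow2_mul_odd. lia. }
  unfold good. rewrite HL, Nat.add_1_r, Nat.iter_succ.
  rewrite Hn at 1. rewrite iter_syr_pow2_mul_pred by lia.
  replace (S i - i) with 1 by lia.
  f_equal. apply (syr_odd_part _ (S w)).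
  pose proof (pow3_gt0 i). rewrite Nat.pow_1_r, (Nat.pow_succ_r' 2 w).
  rewrite (Nat.pow_succ_r' 3 i) in Hw. nia.
Qed.

(** * The residue classes of descending integers *)

Definition flog3 (j : nat) : nat := Nat.log2 (3 ^ j).

Definition descent_exp (j : nat) : nat := S (flog3 j) - j.

(* An odd [x] satisfies [x^(2^b) = 1 mod 2^(b+1)], so this is the inverse of [3^j] modulo [2^b]. *)
Definition inv3 (j : nat) : nat :=
  (3 ^ j) ^ (2 ^ descent_exp j - 1) mod 2 ^ descent_exp j.

(* [k + 1 = 2^(j-1) m] with [m = 3^(-j) mod 2^b_j]; only meaningful for [j >= 1]. *)
Definition class_rep (j : nat) : nat := 2 ^ (j - 1) * inv3 j - 1.

Definition in_class (j k : nat) : bool := Nat.eqb (k mod 2 ^ flog3 j) (class_rep j).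

Lemma flog3_spec j : 2 ^ flog3 j <= 3 ^ j < 2 ^ S (flog3 j).
Proof. apply Nat.log2_spec, pow3_gt0. Qed.

Lemma le_flog3 j : j <= flog3 j.
Proof. apply Nat.log2_le_pow2; [apply pow3_gt0|]. apply Nat.pow_le_mono_l. lia. Qed.

Lemma descent_exp_gt0 j : 0 < descent_exp j.
Proof. unfold descent_exp. pose proof (le_flog3 j). lia. Qed.

Lemma pow2_flog3 j : 0 < j -> 2 ^ flog3 j = 2 ^ (j - 1) * 2 ^ descent_exp j.
Proof.
  intro. rewrite <- Nat.pow_add_r. f_equal. unfold descent_exp. pose proof (le_flog3 j). lia.
Qed.

Lemma Odd_pow x n : Nat.Odd x -> Nat.Odd (x ^ n).
Proof.
  intro Hx. induction n as [|n IH]; [exists 0; reflexivity|].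
  rewrite Nat.pow_succ_r'. apply Nat.Odd_mul; assumption.
Qed.

Lemma Odd_pow_pow2 x b : Nat.Odd x -> exists q, x ^ (2 ^ b) = 1 + 2 ^ S b * q.
Proof.
  intros [d Hd]. induction b as [|b [q Hq]].
  - exists d. simpl. lia.
  - exists (q + 2 ^ b * q * q).
    rewrite (Nat.pow_succ_r' 2 b), (Nat.mul_comm 2), Nat.pow_mul_r, Hq.
    rewrite !(Nat.pow_succ_r' 2). rewrite Nat.pow_2_r. ring.
Qed.

Lemma pow3_mul_inv j :
  exists c, 3 ^ j * (3 ^ j) ^ (2 ^ descent_exp j - 1) = 1 + 2 ^ descent_exp j * c.
Proof.
  destruct (Odd_pow_pow2 (3 ^ j) (descent_exp j)) as [q Hq].
  { apply Odd_pow. exists 1. reflexivity. }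
  exists (2 * q). rewrite <- Nat.pow_succ_r'.
  replace (S (2 ^ descent_exp j - 1)) with (2 ^ descent_exp j)
    by (pose proof (pow2_gt0 (descent_exp j)); lia).
  rewrite Hq, Nat.pow_succ_r'. ring.
Qed.

Lemma inv3_lt j : inv3 j < 2 ^ descent_exp j.
Proof. apply Nat.mod_upper_bound, Nat.pow_nonzero. lia. Qed.

Lemma inv3_odd j : Nat.Odd (inv3 j).
Proof.
  set (b := descent_exp j). set (u := (3 ^ j) ^ (2 ^ b - 1)).
  assert (Hu : Nat.Odd u) by (apply Odd_pow, Odd_pow; exists 1; reflexivity).
  assert (Hb : 2 ^ b = 2 * 2 ^ (b - 1))
    by (rewrite <- Nat.pow_succ_r'; f_equal; pose proof (descent_exp_gt0 j); lia).
  pose proof (Nat.div_mod u (2 ^ b) (Nat.pow_nonzero 2 _ ltac:(lia))) as Hdm.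
  unfold inv3. fold b u. rewrite Hb in Hdm |- *.
  set (r := u mod (2 * 2 ^ (b - 1))) in *.
  set (Q := 2 ^ (b - 1) * (u / (2 * 2 ^ (b - 1)))) in *.
  rewrite <- Nat.mul_assoc in Hdm. fold Q in Hdm.
  destruct Hu as [e He]. destruct (Nat.Even_or_Odd r) as [[f Hf]|]; [lia|assumption].
Qed.

Lemma class_rep_lt j : 0 < j -> class_rep j < 2 ^ flog3 j.
Proof.
  intro Hj. rewrite pow2_flog3 by exact Hj. unfold class_rep.
  pose proof (inv3_lt j). pose proof (pow2_gt0 (j - 1)). nia.
Qed.

Lemma dvd_mul_pred_iff_mod x u B c m : 0 < B -> x * u = 1 + B * c -> 0 < x * m ->
  (Nat.divide B (x * m - 1) <-> m mod B = u mod B).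
Proof.
  intros HB Hu Hxm. split.
  - intros [d Hd].
    assert (Heq : m + (m * c) * B = u + (u * d) * B).
    { transitivity (m * (x * u)); [rewrite Hu; ring|].
      transitivity (u * (x * m)); [ring|].
      replace (x * m) with (1 + d * B) by lia. ring. }
    rewrite <- (Nat.Div0.mod_add m (m * c) B), <- (Nat.Div0.mod_add u (u * d) B). congruence.
  - intros Hmod.
    pose proof (Nat.div_mod m B ltac:(lia)) as Hm. pose proof (Nat.div_mod u B ltac:(lia)) as Hu'.
    rewrite Hmod in Hm.
    set (r := u mod B) in *. set (a := m / B) in *. set (a' := u / B) in *.
    assert (Heq : x * m + x * B * a' = x * B * a + 1 + B * c).
    { rewrite Hm.
      replace (x * (B * a + r) + x * B * a') with (x * B * a + x * (B * a' + r)) by ring.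
      rewrite <- Hu', Hu. ring. }
    replace (x * m - 1) with ((B * (x * a) + B * c) - B * (x * a')) by nia.
    apply Nat.divide_sub_r; [apply Nat.divide_add_r|]; apply Nat.divide_factor_l.
Qed.

Lemma pred_mod_pow2_iff k i d a b f : 0 < b -> 2 * f + 1 < 2 ^ b ->
  k + 1 = 2 ^ i * (2 * d + 1) ->
  (k mod 2 ^ (a + b) = 2 ^ a * (2 * f + 1) - 1 <->
   i = a /\ (2 * d + 1) mod 2 ^ b = 2 * f + 1).
Proof.
  intros Hb Hf Hk.
  assert (HB : 2 ^ b = 2 * 2 ^ (b - 1)) by (rewrite <- Nat.pow_succ_r'; f_equal; lia).
  pose proof (pow2_gt0 a).
  rewrite Nat.pow_add_r. split.
  - intro Hmod.
    pose proof (Nat.div_mod k (2 ^ a * 2 ^ b) ltac:(pose proof (pow2_gt0 b); nia)) as Hdm.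
    rewrite Hmod in Hdm. set (z := k / (2 ^ a * 2 ^ b)) in *.
    assert (Hk2 : 2 ^ i * (2 * d + 1) = 2 ^ a * (2 * (2 ^ (b - 1) * z + f) + 1))
      by (rewrite <- Hk, Hdm, HB; nia).
    apply odd_part_unique in Hk2. destruct Hk2 as [-> ->]. split; [reflexivity|].
    replace (2 * (2 ^ (b - 1) * z + f) + 1) with (2 * f + 1 + z * 2 ^ b) by (rewrite HB; ring).
    rewrite Nat.Div0.mod_add. apply Nat.mod_small. exact Hf.
  - intros [-> Hmod].
    pose proof (Nat.div_mod (2 * d + 1) (2 ^ b) ltac:(lia)) as Hm. rewrite Hmod in Hm.
    symmetry. apply (Nat.mod_unique _ _ ((2 * d + 1) / 2 ^ b)); [nia|].
    rewrite Hm in Hk. nia.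
Qed.

Lemma in_class_iff j k i d : 0 < j -> k + 1 = 2 ^ i * (2 * d + 1) ->
  (in_class j k = true <->
   i = j - 1 /\ Nat.divide (2 ^ descent_exp j) (3 ^ j * (2 * d + 1) - 1)).
Proof.
  intros Hj Hk. destruct (inv3_odd j) as [f Hf].
  destruct (pow3_mul_inv j) as [c Hc]. pose proof (pow3_gt0 j).
  rewrite (dvd_mul_pred_iff_mod _ _ _ c _ (pow2_gt0 _) Hc) by nia. fold (inv3 j).
  unfold in_class, class_rep. rewrite Nat.eqb_eq, Hf.
  replace (flog3 j) with (j - 1 + descent_exp j)
    by (unfold descent_exp; pose proof (le_flog3 j); lia).
  apply pred_mod_pow2_iff; [apply descent_exp_gt0| rewrite <- Hf; apply inv3_lt | exact Hk].
Qed.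

Lemma descent_exp_le_of_lt j m w c : 0 < j -> 0 < m ->
  3 ^ j * m - 1 = 2 ^ w * (2 * c + 1) -> 2 * c + 1 < 2 ^ j * m - 1 -> descent_exp j <= w.
Proof.
  intros Hj Hm Hw Hlt.
  pose proof (pow2_gt0 w). pose proof (pow2_gt0 j). pose proof (pow3_gt0 j).
  assert (H3 : 3 ^ j < 2 ^ (w + j)).
  { rewrite Nat.pow_add_r. apply (Nat.mul_lt_mono_pos_r m); [exact Hm|].
    assert (2 ^ w * (2 * c + 1) < 2 ^ w * (2 ^ j * m - 1)) by (apply Nat.mul_lt_mono_pos_l; auto).
    nia. }
  pose proof (flog3_spec j) as [HE _].
  assert (flog3 j < w + j) by (apply (Nat.pow_lt_mono_r_iff 2); lia).
  unfold descent_exp. lia.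
Qed.

Lemma lt_of_descent_exp_le j m w c : 0 < j -> 2 ^ descent_exp j <= m -> descent_exp j <= w ->
  3 ^ j * m - 1 = 2 ^ w * (2 * c + 1) -> 2 * c + 1 < 2 ^ j * m - 1.
Proof.
  intros Hj Hm Hbw Hw.
  pose proof (flog3_spec j) as [_ HE]. pose proof (le_flog3 j).
  assert (HbJ : 2 ^ S (flog3 j) = 2 ^ descent_exp j * 2 ^ j)
    by (rewrite <- Nat.pow_add_r; f_equal; unfold descent_exp; lia).
  assert (Hw2 : 2 ^ w = 2 ^ descent_exp j * 2 ^ (w - descent_exp j))
    by (rewrite <- Nat.pow_add_r; f_equal; lia).
  pose proof (pow2_gt0 (descent_exp j)). pose proof (pow2_gt0 (w - descent_exp j)).
  assert (HJ : 2 <= 2 ^ j) by (apply (Nat.pow_le_mono_r 2 1 j); lia).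
  set (B := 2 ^ descent_exp j) in *. set (Y := 2 ^ (w - descent_exp j)) in *.
  set (J := 2 ^ j) in *. set (T := 3 ^ j) in *.
  rewrite Hw2 in Hw.
  assert (Hkey : T * m <= B * Y * (J * m - 1)).
  { assert (T * m <= B * J * m - m) by nia.
    assert (B * J * m * (Y - 1) >= 2 * B * (Y - 1)) by nia.
    nia. }
  apply (Nat.mul_lt_mono_pos_l (B * Y)); nia.
Qed.

(** * Counting *)

Fixpoint nat_sum (f : nat -> nat) (n : nat) : nat :=
  match n with O => O | S n => nat_sum f n + f n end.

Lemma nat_sum_single f J i : (forall j, j <> i -> f j = 0) ->
  nat_sum f J = if Nat.ltb i J then f i else 0.
Proof.
  intro H. induction J as [|J IH]; cbn [nat_sum]; [reflexivity|].
  rewrite IH. destruct (Nat.eq_dec J i) as [->|Hne].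
  - destruct (Nat.ltb_spec i i), (Nat.ltb_spec i (S i)); lia.
  - rewrite (H J Hne). destruct (Nat.ltb_spec i J), (Nat.ltb_spec i (S J)); lia.
Qed.

Lemma le_nat_sum f J i : i < J -> f i <= nat_sum f J.
Proof.
  induction J as [|J IH]; intro H; cbn [nat_sum]; [lia|].
  destruct (Nat.eq_dec i J) as [->|]; [lia|]. specialize (IH ltac:(lia)). lia.
Qed.

Lemma nat_sum_le f g J : (forall j, f j <= g j) -> nat_sum f J <= nat_sum g J.
Proof. intro H. induction J; cbn [nat_sum]; [lia|]. specialize (H J). lia. Qed.

Lemma nat_sum_add f g J : nat_sum (fun j => f j + g j) J = nat_sum f J + nat_sum g J.
Proof. induction J; cbn [nat_sum]; lia. Qed.

Lemma nat_sum_swap (f : nat -> nat -> nat) J N :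
  nat_sum (fun k => nat_sum (fun j => f j k) J) N = nat_sum (fun j => nat_sum (fun k => f j k) N) J.
Proof.
  induction N as [|N IH]; cbn [nat_sum].
  - induction J; cbn [nat_sum]; lia.
  - rewrite IH, <- nat_sum_add. reflexivity.
Qed.

Lemma nat_sum_b2n_le (p : nat -> bool) N : nat_sum (fun k => Nat.b2n (p k)) N <= N.
Proof. induction N; cbn [nat_sum]; [lia|]. destruct (p N); simpl; lia. Qed.

Lemma count_lt_le Q N : nat_sum (fun k => Nat.b2n (Nat.ltb (k + 1) Q)) N <= Q.
Proof.
  induction N as [|N IH]; cbn [nat_sum]; [lia|].
  destruct (Nat.ltb_spec (N + 1) Q); simpl; [|lia].
  pose proof (nat_sum_b2n_le (fun k => Nat.ltb (k + 1) Q) N). lia.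
Qed.

Lemma count_mod_eq q s N : 0 < q -> s < q ->
  nat_sum (fun k => Nat.b2n (Nat.eqb (k mod q) s)) N = N / q + Nat.b2n (Nat.ltb s (N mod q)).
Proof.
  intros Hq Hs. induction N as [|N IH].
  - rewrite Nat.Div0.div_0_l, Nat.Div0.mod_0_l. destruct s; reflexivity.
  - cbn [nat_sum]. rewrite IH.
    pose proof (Nat.div_mod N q ltac:(lia)) as Hdm.
    pose proof (Nat.mod_upper_bound N q ltac:(lia)) as Hub.
    set (a := N / q) in *. set (r := N mod q) in *.
    destruct (Nat.eq_dec r (q - 1)) as [Hr|Hr].
    + rewrite <- (Nat.div_unique (S N) q (a + 1) 0), <- (Nat.mod_unique (S N) q (a + 1) 0) by lia.
      rewrite Hr. destruct (Nat.eqb_spec (q - 1) s), (Nat.ltb_spec s (q - 1)); simpl; lia.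
    + rewrite <- (Nat.div_unique (S N) q a (r + 1)), <- (Nat.mod_unique (S N) q a (r + 1)) by lia.
      destruct (Nat.eqb_spec r s), (Nat.ltb_spec s r), (Nat.ltb_spec s (r + 1)); simpl; lia.
Qed.

Lemma good_decomp k : exists i d w c,
  k + 1 = 2 ^ i * (2 * d + 1) /\ 3 ^ S i * (2 * d + 1) - 1 = 2 ^ w * (2 * c + 1) /\
  good (2 * k + 1) = Nat.ltb (2 * c + 1) (2 * k + 1).
Proof.
  destruct (odd_part_exists (k + 1) ltac:(lia)) as [i [d Hk]].
  destruct (odd_part_exists (3 ^ S i * (2 * d + 1) - 1)) as [w [c Hw]].
  { rewrite Nat.pow_succ_r'. pose proof (pow3_gt0 i). nia. }
  exists i, d, w, c. repeat split; [exact Hk|exact Hw|]. eapply good_odd_part; eauto.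
Qed.

Lemma sum_in_class k J i d : k + 1 = 2 ^ i * (2 * d + 1) ->
  nat_sum (fun j => Nat.b2n (in_class (S j) k)) J =
  if Nat.ltb i J then Nat.b2n (in_class (S i) k) else 0.
Proof.
  intro Hk. apply (nat_sum_single (fun j => Nat.b2n (in_class (S j) k))).
  intros j Hj. destruct (in_class (S j) k) eqn:He; [|reflexivity].
  apply (in_class_iff (S j) k i d ltac:(lia) Hk) in He. lia.
Qed.

(* A good [2k+1] with [L = i] lies in class [i + 1] if [i < J], and otherwise [k = -1 mod 2^J]. *)
Lemma good_le_sum_in_class k J :
  Nat.b2n (good (2 * k + 1)) <=
  nat_sum (fun j => Nat.b2n (in_class (S j) k)) J + Nat.b2n (Nat.eqb (k mod 2 ^ J) (2 ^ J - 1)).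
Proof.
  destruct (good_decomp k) as [i [d [w [c [Hk [Hw ->]]]]]].
  rewrite (sum_in_class k J i d Hk).
  destruct (Nat.ltb_spec (2 * c + 1) (2 * k + 1)) as [Hlt|]; [|simpl; lia].
  assert (Hbw : descent_exp (S i) <= w).
  { apply (descent_exp_le_of_lt (S i) (2 * d + 1) w c); try lia; auto.
    rewrite Nat.pow_succ_r'. lia. }
  assert (HE : in_class (S i) k = true).
  { apply (in_class_iff (S i) k i d ltac:(lia) Hk). split; [lia|].
    rewrite Hw. apply pow2_dvd_pow2_mul_odd. exact Hbw. }
  destruct (Nat.ltb_spec i J) as [|HiJ]; [rewrite HE; simpl; lia|].
  replace (k mod 2 ^ J) with (2 ^ J - 1); [rewrite Nat.eqb_refl; simpl; lia|].
  pose proof (pow2_gt0 J). pose proof (pow2_gt0 (i - J)).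
  assert (Hs : 2 ^ i = 2 ^ J * 2 ^ (i - J)) by (rewrite <- Nat.pow_add_r; f_equal; lia).
  apply (Nat.mod_unique _ _ (2 ^ (i - J) * (2 * d + 1) - 1)); [lia|].
  rewrite Hs in Hk. nia.
Qed.

(* Membership in class [j] forces descent once [k + 1 >= 2^flog3 j], i.e. [m >= 2^descent_exp j]. *)
Lemma sum_in_class_le_good k J :
  nat_sum (fun j => Nat.b2n (in_class (S j) k)) J <=
  Nat.b2n (good (2 * k + 1)) + nat_sum (fun j => Nat.b2n (Nat.ltb (k + 1) (2 ^ flog3 (S j)))) J.
Proof.
  destruct (good_decomp k) as [i [d [w [c [Hk [Hw ->]]]]]].
  rewrite (sum_in_class k J i d Hk).
  destruct (Nat.ltb_spec i J) as [HiJ|]; [|lia].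
  destruct (in_class (S i) k) eqn:HE; [|simpl; lia].
  apply (in_class_iff (S i) k i d ltac:(lia) Hk) in HE. destruct HE as [_ Hdiv].
  rewrite Hw, pow2_dvd_pow2_mul_odd in Hdiv.
  pose proof (le_nat_sum (fun j => Nat.b2n (Nat.ltb (k + 1) (2 ^ flog3 (S j)))) J i HiJ) as Hle.
  cbn beta in Hle.
  destruct (Nat.ltb_spec (k + 1) (2 ^ flog3 (S i))) as [|Hsm]; [simpl in *; lia|].
  rewrite pow2_flog3, Hk in Hsm by lia. replace (S i - 1) with i in Hsm by lia.
  apply Nat.mul_le_mono_pos_l in Hsm; [|apply pow2_gt0].
  assert (Hlt : 2 * c + 1 < 2 ^ S i * (2 * d + 1) - 1)
    by (apply (lt_of_descent_exp_le _ _ w); auto; lia).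
  rewrite Nat.pow_succ_r' in Hlt.
  destruct (Nat.ltb_spec (2 * c + 1) (2 * k + 1)); simpl; lia.
Qed.

Definition class_count (j N : nat) : nat := nat_sum (fun k => Nat.b2n (in_class j k)) N.

Lemma count_good_eq N : count_good N = nat_sum (fun k => Nat.b2n (good (2 * k + 1))) N.
Proof.
  unfold count_good. induction N as [|N IH]; [reflexivity|].
  rewrite seq_S, filter_app, length_app, IH, Nat.add_0_l. cbn [nat_sum filter].
  destruct (good (2 * N + 1)); reflexivity.
Qed.

Lemma count_good_le J N :
  count_good N <= nat_sum (fun j => class_count (S j) N) J
                  + nat_sum (fun k => Nat.b2n (Nat.eqb (k mod 2 ^ J) (2 ^ J - 1))) N.
Proof.
  rewrite count_good_eq. unfold class_count.
  rewrite <- (nat_sum_swap (fun j k => Nat.b2n (in_class (S j) k))), <- nat_sum_add.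
  apply nat_sum_le. intro k. apply good_le_sum_in_class.
Qed.

Lemma count_good_ge J N :
  nat_sum (fun j => class_count (S j) N) J <= count_good N + nat_sum (fun j => 2 ^ flog3 (S j)) J.
Proof.
  rewrite count_good_eq. unfold class_count.
  rewrite <- (nat_sum_swap (fun j k => Nat.b2n (in_class (S j) k))).
  eapply Nat.le_trans; [apply nat_sum_le; intro k; apply sum_in_class_le_good|].
  rewrite nat_sum_add. apply Nat.add_le_mono_l.
  rewrite (nat_sum_swap (fun j k => Nat.b2n (Nat.ltb (k + 1) (2 ^ flog3 (S j))))).
  apply nat_sum_le. intro j. apply count_lt_le.
Qed.

(** * The series and the density *)

Open Scope R_scope.

Lemma INR_pow2 e : INR (2 ^ e) = 2 ^ e.
Proof. rewrite pow_INR. reflexivity. Qed.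

Lemma INR_pow3 e : INR (3 ^ e) = 3 ^ e.
Proof. rewrite pow_INR. simpl INR. f_equal. lra. Qed.

Lemma flog3_spec_R j : 2 ^ flog3 j <= 3 ^ j < 2 ^ S (flog3 j).
Proof.
  pose proof (flog3_spec j) as [H1 H2]. rewrite <- INR_pow2, <- INR_pow3, <- INR_pow2.
  split; [apply le_INR|apply lt_INR]; assumption.
Qed.

Lemma Int_part_log2_3 j :
  Int_part ((log2_3 - 1) * INR j) = (Z.of_nat (flog3 j) - Z.of_nat j)%Z.
Proof.
  pose proof (flog3_spec_R j) as [H1 H2].
  assert (Hln2 : 0 < ln 2) by (pose proof ln_lt_2; lra).
  assert (L1 : INR (flog3 j) * ln 2 <= INR j * ln 3).
  { rewrite <- !ln_pow by lra. destruct (Rle_lt_or_eq_dec _ _ H1) as [H|H]; [|rewrite H; lra].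
    left. apply ln_increasing; [apply pow_lt; lra|exact H]. }
  assert (L2 : INR j * ln 3 < (INR (flog3 j) + 1) * ln 2).
  { rewrite <- S_INR, <- !ln_pow by lra. apply ln_increasing; [apply pow_lt; lra|exact H2]. }
  assert (Hx : (log2_3 - 1) * INR j * ln 2 = INR j * ln 3 - INR j * ln 2)
    by (unfold log2_3; field; lra).
  unfold Int_part.
  replace (up ((log2_3 - 1) * INR j)) with (Z.of_nat (flog3 j) - Z.of_nat j + 1)%Z; [ring|].
  apply tech_up; rewrite plus_IZR, minus_IZR, <- !INR_IZR_INZ.
  - apply (Rmult_lt_reg_r (ln 2)); lra.
  - apply (Rmult_le_reg_r (ln 2)); lra.
Qed.

Lemma P1cyc_term_eq l : P1cyc_term l = / 2 ^ flog3 (S l).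
Proof.
  unfold P1cyc_term. rewrite Nat.add_1_r, Int_part_log2_3.
  pose proof (le_flog3 (S l)).
  replace (- (Z.of_nat (flog3 (S l)) - Z.of_nat (S l)))%Z with (- Z.of_nat (flog3 (S l) - S l))%Z
    by lia.
  rewrite powerRZ_neg', <- pow_powerRZ, pow_inv, <- Rinv_mult, <- pow_add.
  do 2 f_equal. lia.
Qed.

Lemma P1cyc_term_pos l : 0 < P1cyc_term l.
Proof. rewrite P1cyc_term_eq. apply Rinv_0_lt_compat, pow_lt. lra. Qed.

Lemma P1cyc_term_le l : P1cyc_term l <= (/ 3) ^ l - (/ 3) ^ S l.
Proof.
  rewrite P1cyc_term_eq. pose proof (flog3_spec_R (S l)) as [_ H].
  assert (H3 : 0 < 3 ^ l) by (apply pow_lt; lra).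
  assert (H2 : 0 < 2 ^ flog3 (S l)) by (apply pow_lt; lra).
  rewrite !pow_inv. simpl in H |- *.
  apply (Rmult_le_reg_r (2 ^ flog3 (S l) * (3 * 3 ^ l))); [nra|].
  field_simplify; lra.
Qed.

Lemma P1cyc_partial_growing : Un_growing (sum_f_R0 P1cyc_term).
Proof. intro n. simpl. pose proof (P1cyc_term_pos (S n)). lra. Qed.

Lemma P1cyc_partial_tail K m :
  sum_f_R0 P1cyc_term (K + m) + (/ 3) ^ S (K + m) <= sum_f_R0 P1cyc_term K + (/ 3) ^ S K.
Proof.
  induction m as [|m IH]; [rewrite Nat.add_0_r; lra|].
  rewrite Nat.add_succ_r. simpl sum_f_R0 at 1. pose proof (P1cyc_term_le (S (K + m))). lra.
Qed.

Lemma P1cyc_partial_le K n :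
  sum_f_R0 P1cyc_term n <= sum_f_R0 P1cyc_term K + (/ 3) ^ S K.
Proof.
  assert (Hpos : forall m, 0 < (/ 3) ^ m) by (intro; apply pow_lt; lra).
  destruct (le_lt_dec n K) as [Hn|Hn].
  - pose proof (tech9 _ P1cyc_partial_growing n K Hn). pose proof (Hpos (S K)). lra.
  - pose proof (P1cyc_partial_tail K (n - K)) as H. replace (K + (n - K))%nat with n in H by lia.
    pose proof (Hpos (S n)). lra.
Qed.

Lemma count_mod_bounds q s N : (0 < q)%nat -> (s < q)%nat ->
  INR N / INR q - 1 <= INR (nat_sum (fun k => Nat.b2n (Nat.eqb (k mod q) s)) N)
  <= INR N / INR q + 1.
Proof.
  intros Hq Hs. rewrite count_mod_eq by assumption.
  pose proof (Nat.div_mod N q ltac:(lia)) as Hdm.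
  pose proof (Nat.mod_upper_bound N q ltac:(lia)) as Hub.
  assert (HqR : 0 < INR q) by (apply lt_0_INR; lia).
  assert (HN : INR N = INR q * INR (N / q) + INR (N mod q))
    by (rewrite Hdm at 1; rewrite plus_INR, mult_INR; reflexivity).
  assert (Hr : 0 <= INR (N mod q) < INR q) by (split; [apply pos_INR|apply lt_INR; lia]).
  assert (Hb : 0 <= INR (Nat.b2n (Nat.ltb s (N mod q))) <= 1)
    by (destruct (Nat.ltb s (N mod q)); simpl; lra).
  assert (Hfrac : 0 <= INR (N mod q) / INR q < 1).
  { split; [apply Rmult_le_pos; [lra|left; apply Rinv_0_lt_compat; lra]|].
    apply (Rmult_lt_reg_r (INR q)); [lra|]. unfold Rdiv. rewrite Rmult_assoc, Rinv_l; lra. }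
  replace (INR N / INR q) with (INR (N / q) + INR (N mod q) / INR q) by (rewrite HN; field; lra).
  rewrite plus_INR. lra.
Qed.

Lemma class_count_bounds j N : (0 < j)%nat ->
  INR N / 2 ^ flog3 j - 1 <= INR (class_count j N) <= INR N / 2 ^ flog3 j + 1.
Proof.
  intro Hj. rewrite <- INR_pow2. apply count_mod_bounds; [apply pow2_gt0|apply class_rep_lt, Hj].
Qed.

Lemma sum_class_count_bounds J N :
  INR N * sum_f_R0 P1cyc_term J - INR (S J)
  <= INR (nat_sum (fun j => class_count (S j) N) (S J))
  <= INR N * sum_f_R0 P1cyc_term J + INR (S J).
Proof.
  induction J as [|J IH]; cbn [nat_sum sum_f_R0].
  - rewrite P1cyc_term_eq, Nat.add_0_l. pose proof (class_count_bounds 1 N ltac:(lia)).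
    simpl INR. unfold Rdiv in *. lra.
  - cbn [nat_sum] in IH. rewrite plus_INR, (S_INR (S J)), Rmult_plus_distr_l, P1cyc_term_eq.
    pose proof (class_count_bounds (S (S J)) N ltac:(lia)). unfold Rdiv in *. lra.
Qed.

Lemma dens_approx J N : (0 < N)%nat ->
  Rabs (dens N - sum_f_R0 P1cyc_term J) <=
  1 / 2 ^ J + (INR (S J) + 1 + INR (nat_sum (fun j => 2 ^ flog3 (S j))%nat (S J))) / INR N.
Proof.
  intro HN. assert (Hx : 0 < INR N) by (apply lt_0_INR; lia).
  set (s := sum_f_R0 P1cyc_term J). set (C := INR (nat_sum (fun j => 2 ^ flog3 (S j))%nat (S J))).
  assert (HC : 0 <= C) by apply pos_INR.
  assert (H2J : 0 < 2 ^ J) by (apply pow_lt; lra).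
  assert (Hpow : / 2 ^ S J <= 1 / 2 ^ J).
  { unfold Rdiv. rewrite Rmult_1_l. apply Rinv_le_contravar; [apply pow_lt; lra|].
    simpl. pose proof (pow_lt 2 J). lra. }
  pose proof (sum_class_count_bounds J N) as [Hlo Hhi]. fold s in Hlo, Hhi.
  assert (Hup : INR (count_good N) - INR N * s <= INR N * (1 / 2 ^ J) + INR (S J) + 1).
  { pose proof (count_good_le (S J) N) as H. apply le_INR in H. rewrite plus_INR in H.
    pose proof (count_mod_bounds (2 ^ S J) (2 ^ S J - 1) N (pow2_gt0 _)
      ltac:(pose proof (pow2_gt0 (S J)); lia)) as [_ H2].
    rewrite INR_pow2 in H2. unfold Rdiv in H2.
    pose proof (Rmult_le_compat_l (INR N) _ _ (pos_INR N) Hpow). lra. }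
  assert (Hdown : - (INR (S J) + C) <= INR (count_good N) - INR N * s).
  { pose proof (count_good_ge (S J) N) as H. apply le_INR in H. rewrite plus_INR in H. fold C in H.
    lra. }
  replace (dens N - s) with ((INR (count_good N) - INR N * s) / INR N) by (unfold dens; field; lra).
  replace (1 / 2 ^ J + (INR (S J) + 1 + C) / INR N)
    with ((INR N * (1 / 2 ^ J) + INR (S J) + 1 + C) / INR N) by (field; lra).
  unfold Rdiv. rewrite Rabs_mult, Rabs_inv, (Rabs_pos_eq (INR N)) by lra.
  apply Rmult_le_compat_r; [left; apply Rinv_0_lt_compat; exact Hx|].
  assert (0 <= INR N * (1 / 2 ^ J))
    by (apply Rmult_le_pos; [lra|apply Rlt_le, Rdiv_lt_0_compat; lra]).
  apply Rabs_le. lra.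
Qed.

Lemma Un_cv_of_approx (u s : nat -> R) (l : R) : Un_cv s l ->
  (forall J, exists c, forall N, (0 < N)%nat -> Rabs (u N - s J) <= 1 / 2 ^ J + c / INR N) ->
  Un_cv u l.
Proof.
  intros Hs Happrox eps Heps.
  destruct (Hs (eps / 3) ltac:(lra)) as [N1 HN1].
  destruct (cv_pow_half 1 (eps / 3) ltac:(lra)) as [N2 HN2].
  set (J := Nat.max N1 N2).
  specialize (HN1 J ltac:(lia)). specialize (HN2 J ltac:(lia)).
  destruct (Happrox J) as [c Happrox_J].
  unfold Rdist in HN1, HN2. rewrite Rminus_0_r, Rabs_pos_eq in HN2
    by (unfold Rdiv; rewrite Rmult_1_l; left; apply Rinv_0_lt_compat, pow_lt; lra).
  destruct (INR_archimed (eps / 3) (Rabs c) ltac:(lra)) as [N0 HN0].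
  exists (S N0). intros N HN. unfold Rdist.
  assert (HNR : INR N0 < INR N) by (apply lt_INR; lia).
  assert (Hc : c / INR N < eps / 3).
  { assert (HxN : 0 < INR N) by (pose proof (pos_INR N0); lra).
    apply (Rmult_lt_reg_r (INR N)); [exact HxN|].
    unfold Rdiv. rewrite Rmult_assoc, Rinv_l, Rmult_1_r by lra.
    pose proof (Rle_abs c). pose proof (pos_INR N0).
    pose proof (Rmult_lt_compat_r (eps / 3) _ _ ltac:(lra) HNR). lra. }
  specialize (Happrox_J N ltac:(lia)).
  replace (u N - l) with ((u N - s J) + (s J - l)) by ring.
  pose proof (Rabs_triang (u N - s J) (s J - l)). lra.
Qed.

Lemma Un_cv_le_const (u : nat -> R) l M : Un_cv u l -> (forall n, u n <= M) -> l <= M.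
Proof.
  intros Hu HM. apply (Rle_cv_lim HM Hu).
  intros eps Heps. exists 0%nat. intros. unfold Rdist. rewrite Rminus_diag, Rabs_R0. exact Heps.
Qed.

(* [3^33] is out of reach of unary [nat] arithmetic, so [flog3] is evaluated in binary. *)
Lemma flog3_of_N j e :
  andb (N.leb (2 ^ N.of_nat e) (3 ^ N.of_nat j)) (N.ltb (3 ^ N.of_nat j) (2 ^ N.succ (N.of_nat e)))
  = true ->
  flog3 j = e.
Proof.
  intro H. apply andb_prop in H as [H1 H2]. apply N.leb_le in H1. apply N.ltb_lt in H2.
  assert (H1' : (N.of_nat (2 ^ e) <= N.of_nat (3 ^ j))%N) by (rewrite !Nat2N.inj_pow; exact H1).
  assert (H2' : (N.of_nat (3 ^ j) < N.of_nat (2 ^ S e))%N)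
    by (rewrite !Nat2N.inj_pow, (Nat2N.inj_succ e); exact H2).
  apply Nat.log2_unique; lia.
Qed.

Ltac flog3_eval :=
  repeat match goal with
  | |- context [flog3 ?j] =>
      let e := eval vm_compute in (N.to_nat (N.log2 (3 ^ N.of_nat j))) in
      rewrite (flog3_of_N j e) by (vm_compute; reflexivity)
  end.

Lemma P1cyc_partial_32 :
  71372549767589 / 100000000000000 <= sum_f_R0 P1cyc_term 32 /\
  sum_f_R0 P1cyc_term 32 + (/ 3) ^ 33 < 71372549767590 / 100000000000000.
Proof.
  rewrite (sum_eq _ (fun l => / 2 ^ flog3 (S l))) by (intros; apply P1cyc_term_eq).
  cbn [sum_f_R0]. flog3_eval. split; lra.
Qed.

Theorem mainTheorem13 :
  exists P : R,
    infinite_sum P1cyc_term P /\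
    Un_cv dens P /\
    71372549767589 / 100000000000000 <= P < 71372549767590 / 100000000000000.
Proof.
  destruct (growing_cv _ P1cyc_partial_growing) as [P HP].
  { exists (sum_f_R0 P1cyc_term 0 + (/ 3) ^ 1). intros x [n ->]. apply P1cyc_partial_le. }
  exists P. split; [exact HP|split].
  - apply (Un_cv_of_approx dens _ P HP). intro J. eexists. intros N HN. apply dens_approx, HN.
  - destruct P1cyc_partial_32 as [Hlo Hhi]. split.
    + pose proof (growing_ineq _ _ P1cyc_partial_growing HP 32). lra.
    + pose proof (Un_cv_le_const _ _ _ HP (P1cyc_partial_le 32)). lra.
Qed.
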